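(* The elements of $\mathcal{R}$ with small support generate $\mathcal{R}$, and $\mathcal{R}=[\mathcal{R},\mathcal{R}]$.
   Context: $\mathcal{R}$ is the group of rational homeomorphisms of $\{0,1\}^\omega$: those $f$ for which there is a finite asynchronous binary transducer $(S,s_0,t,o)$ ($S$ finite, $t\colon S\times\{0,1\}\to S$, $o\colon S\times\{0,1\}\to\{0,1\}^*$) with $f(\psi)=o(s_0,\psi)$, where for $\sigma_1\sigma_2\cdots$ one sets $s_1=s_0$, $s_{n+1}=t(s_n,\sigma_n)$ and $o(s_0,\sigma_1\sigma_2\cdots)=o(s_1,\sigma_1)o(s_2,\sigma_2)\cdots$. An element $f$ has small support if there is a proper nonempty clopen subset $E\subseteq\{0,1\}^\omega$ such that $f$ is the identity on the complement of $E$. *)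

From mathcomp Require Import all_boot.
Set Implicit Arguments. Unset Strict Implicit. Unset Printing Implicit Defensive.

Definition cantor := nat -> bool.

Definition agree (n : nat) (x y : cantor) : Prop := forall i, i < n -> x i = y i.

Definition cantor_open (E : cantor -> Prop) : Prop :=
  forall x, E x -> exists n, forall y, agree n x y -> E y.

Definition cantor_closed (E : cantor -> Prop) : Prop :=
  cantor_open (fun x => ~ E x).

Definition clopen (E : cantor -> Prop) : Prop := cantor_open E /\ cantor_closed E.

Definition cantor_continuous (f : cantor -> cantor) : Prop :=
  forall x n, exists m, forall y, agree m x y -> agree n (f x) (f y).

Definition homeomorphism (f : cantor -> cantor) : Prop :=
  exists g : cantor -> cantor,
    (forall x, g (f x) = x) /\ (forall x, f (g x) = x) /\
    cantor_continuous f /\ cantor_continuous g.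

Section Transducer.
Variables (S : finType) (s0 : S) (t : S -> bool -> S) (o : S -> bool -> seq bool).

(* state_at psi n = s_{n+1} in the paper's 1-based indexing: s_1 = s0,
   s_{n+1} = t(s_n, sigma_n); here psi i is sigma_{i+1}. *)
Fixpoint state_at (psi : cantor) (n : nat) : S :=
  if n is n'.+1 then t (state_at psi n') (psi n') else s0.

Fixpoint out_prefix (psi : cantor) (n : nat) : seq bool :=
  if n is n'.+1 then out_prefix psi n' ++ o (state_at psi n') (psi n') else [::].

(* o(s0, psi) is the infinite word w: all finite partial outputs are prefixes of w,
   and their lengths are unbounded (so the output is genuinely infinite). *)
Definition transducer_output (psi w : cantor) : Prop :=
  (forall n i, i < size (out_prefix psi n) -> nth false (out_prefix psi n) i = w i) /\
  (forall k, exists n, k <= size (out_prefix psi n)).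
End Transducer.

Definition rational_map (f : cantor -> cantor) : Prop :=
  exists (S : finType) (s0 : S) (t : S -> bool -> S) (o : S -> bool -> seq bool),
    forall psi, transducer_output s0 t o psi (f psi).

Definition RH (f : cantor -> cantor) : Prop := homeomorphism f /\ rational_map f.

Definition small_support (f : cantor -> cantor) : Prop :=
  exists E : cantor -> Prop,
    clopen E /\ (exists x, E x) /\ (exists y, ~ E y) /\
    (forall x, ~ E x -> f x = x).

Inductive gen_by (A : (cantor -> cantor) -> Prop) : (cantor -> cantor) -> Prop :=
  | gen_id : gen_by A id
  | gen_mul g h : A g -> gen_by A h -> gen_by A (g \o h)
  | gen_inv g g' h : A g -> (forall x, g (g' x) = x) -> (forall x, g' (g x) = x) ->
      gen_by A h -> gen_by A (g' \o h).

Definition commutator_RH (c : cantor -> cantor) : Prop :=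
  exists a a' b b',
    RH a /\ RH b /\
    (forall x, a (a' x) = x) /\ (forall x, a' (a x) = x) /\
    (forall x, b (b' x) = x) /\ (forall x, b' (b x) = x) /\
    c = a' \o b' \o a \o b.

(* A homeomorphism of Cantor space is rational iff it has finitely many residuals, the maps
   x |-> f (u x) with the common prefix of their values removed; in this form rationality is
   visibly preserved by composition and, using compactness, by inversion.
   If f <> id, continuity gives a cylinder C with f(C) disjoint from C.  The involution g that
   agrees with f on C, with f^-1 on f(C) and with the identity elsewhere is rational, g fixes
   pointwise a cylinder outside C and f(C), and g \o f fixes C pointwise.  So f = g \o (g \o f)
   is a product of two elements fixing a cylinder, and such elements have small support.
   Each of them is moreover a commutator: after conjugating by a prefix replacement we may
   assume that h fixes the cylinder 1, and then h = c s c^-1 s^-1, where c acts as h on each of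
   the disjoint cylinders 0, 101, 1001, ... and the prefix replacement s moves each of these
   cylinders onto the next one (Hilbert's hotel). *)

From Stdlib Require Import Classical ClassicalEpsilon FunctionalExtensionality.
From mathcomp Require Import all_boot zify.
Set Implicit Arguments. Unset Strict Implicit. Unset Printing Implicit Defensive.

(** * Finite words and infinite sequences *)

Definition prepend (u : seq bool) (x : cantor) : cantor :=
  fun i => if i < size u then nth false u i else x (i - size u).
Definition shift (k : nat) (x : cantor) : cantor := fun i => x (k + i).
Definition ctake (n : nat) (x : cantor) : seq bool := mkseq x n.
Definition zeros : cantor := fun _ => false.

Lemma size_ctake n x : size (ctake n x) = n.
Proof. exact: size_mkseq. Qed.

Lemma nth_ctake n x i : i < n -> nth false (ctake n x) i = x i.
Proof. exact: nth_mkseq. Qed.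

Lemma prepend_lt u x i : i < size u -> prepend u x i = nth false u i.
Proof. by rewrite /prepend => ->. Qed.

Lemma prepend_ge u x i : size u <= i -> prepend u x i = x (i - size u).
Proof. by rewrite /prepend; case: ltnP. Qed.

Lemma prepend_nil x : prepend [::] x = x.
Proof. by apply: functional_extensionality => i; rewrite prepend_ge ?subn0. Qed.

Lemma prepend_cat u v x : prepend u (prepend v x) = prepend (u ++ v) x.
Proof.
apply: functional_extensionality => i; rewrite /prepend size_cat nth_cat.
case: (ltnP i (size u)) => hu; first by rewrite ltn_addr.
have -> : (i - size u < size v) = (i < size u + size v) by lia.
by case: ifP => // _; rewrite subnDA.
Qed.

Lemma shift0 x : shift 0 x = x.
Proof. by []. Qed.

Lemma shiftD j k x : shift j (shift k x) = shift (k + j) x.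
Proof. by apply: functional_extensionality => i; rewrite /shift addnA. Qed.

Lemma shift_prepend u x : shift (size u) (prepend u x) = x.
Proof.
by apply: functional_extensionality => i; rewrite /shift prepend_ge ?leq_addr // addKn.
Qed.

Lemma prepend_ctake_shift n x : prepend (ctake n x) (shift n x) = x.
Proof.
apply: functional_extensionality => i; rewrite /prepend /shift size_ctake.
by case: ifP => hi; [rewrite nth_ctake | rewrite subnKC //; lia].
Qed.

Lemma prepend_inj u : injective (prepend u).
Proof. by move=> x y e; rewrite -(shift_prepend u x) e shift_prepend. Qed.

Lemma prepend_cons0 b u y : prepend (b :: u) y 0 = b.
Proof. by []. Qed.

Lemma prepend_consS b u y i : prepend (b :: u) y i.+1 = prepend u y i.
Proof. by rewrite /prepend /=; case: ifP. Qed.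

Lemma prepend_cons b u y : prepend (b :: u) y = prepend [:: b] (prepend u y).
Proof. by rewrite prepend_cat. Qed.

Lemma shift1_cons b u x : shift 1 (prepend (b :: u) x) = prepend u x.
Proof. by rewrite -(shift_prepend [:: b] (prepend u x)) prepend_cat. Qed.

Lemma shiftS_cons k b u y : shift k.+1 (prepend (b :: u) y) = shift k (prepend u y).
Proof. by rewrite -(shift1_cons b u y) shiftD. Qed.

Ltac prepend_simpl :=
  repeat rewrite ?prepend_cons0 ?prepend_consS ?shiftS_cons ?shift0 ?prepend_cat ?prepend_nil /=.

Lemma ctake_prepend u x : ctake (size u) (prepend u x) = u.
Proof.
apply: (@eq_from_nth _ false); rewrite ?size_ctake // => i hi.
by rewrite nth_ctake // prepend_lt.
Qed.

Lemma ctake_prependD u x n : ctake (size u + n) (prepend u x) = u ++ ctake n x.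
Proof.
apply: (@eq_from_nth _ false); rewrite size_ctake ?size_cat ?size_ctake // => i hi.
rewrite nth_ctake // nth_cat /prepend; case: ifP => // hu.
by rewrite nth_ctake; lia.
Qed.

Lemma ctake_take m n x : m <= n -> ctake m x = take m (ctake n x).
Proof.
move=> hmn; apply: (@eq_from_nth _ false); rewrite ?size_take !size_ctake.
  by case: ltnP; lia.
by move=> i hi; rewrite nth_take // !nth_ctake //; lia.
Qed.

Lemma ctake_prepend_take n u x : n <= size u -> ctake n (prepend u x) = take n u.
Proof. by move=> hn; rewrite (ctake_take _ hn) ctake_prepend. Qed.

Lemma ctakeS n x : ctake n.+1 x = rcons (ctake n x) (x n).
Proof. by rewrite /ctake /mkseq -addn1 iotaD map_cat cats1. Qed.

Lemma agree_ctake n x y : agree n x y <-> ctake n x = ctake n y.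
Proof.
split=> [h | e i hi]; last by rewrite -(nth_ctake x hi) e nth_ctake.
by apply: (@eq_from_nth _ false); rewrite ?size_ctake // => i hi; rewrite !nth_ctake ?h.
Qed.

Lemma agree_le m n x y : m <= n -> agree n x y -> agree m x y.
Proof. by move=> hmn h i hi; apply: h; lia. Qed.

Lemma agree_sym n x y : agree n x y -> agree n y x.
Proof. by move=> h i hi; rewrite h. Qed.

Lemma agree_trans n x y z : agree n x y -> agree n y z -> agree n x z.
Proof. by move=> h1 h2 i hi; rewrite h1 ?h2. Qed.

Lemma agree_prepend u n x y : agree (size u + n) (prepend u x) (prepend u y) <-> agree n x y.
Proof.
split=> h i hi.
  by have := h (size u + i); rewrite !prepend_ge ?leq_addr // addKn; apply; lia.
case: (ltnP i (size u)) => hu; first by rewrite !prepend_lt.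
by rewrite !prepend_ge //; apply: h; lia.
Qed.

Lemma agree_ctake_prepend n x y : agree n x (prepend (ctake n x) y).
Proof. by move=> i hi; rewrite prepend_lt ?size_ctake // nth_ctake. Qed.

Lemma prepend_ctake2 x : x = prepend [:: x 0; x 1] (shift 2 x).
Proof. exact/esym/(prepend_ctake_shift 2 x). Qed.

Lemma prepend_ctake3 x : x = prepend [:: x 0; x 1; x 2] (shift 3 x).
Proof. exact/esym/(prepend_ctake_shift 3 x). Qed.

(** * Residuals *)

Definition common_prefix k (F : cantor -> cantor) : Prop := forall x y, agree k (F x) (F y).
Definition nonconstant (F : cantor -> cantor) : Prop := exists x y, F x <> F y.

(* Unspecified when [F] is constant. *)
Definition lcp_size (F : cantor -> cantor) : nat :=
  epsilon (inhabits 0) (fun k => common_prefix k F /\ ~ common_prefix k.+1 F).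

Definition lcp (F : cantor -> cantor) : seq bool := ctake (lcp_size F) (F zeros).

Definition strip_lcp (F : cantor -> cantor) (x : cantor) : cantor := shift (lcp_size F) (F x).

Lemma common_prefix_le j k F : j <= k -> common_prefix k F -> common_prefix j F.
Proof. by move=> hjk c x y; apply: agree_le (c x y). Qed.

Lemma common_prefix_shift k j F :
  common_prefix k F -> common_prefix j (fun x => shift k (F x)) -> common_prefix (k + j) F.
Proof.
move=> hk hj x y i hi; case: (ltnP i k) => hik; first exact: hk.
by have := hj x y (i - k); rewrite /shift subnKC //; apply; lia.
Qed.

Lemma nonconstantP F : nonconstant F <-> exists k, ~ common_prefix k F.
Proof.
split=> [[x [y hxy]] | [k hk]].
  have [i hi] : exists i, F x i <> F y i.
    apply: NNPP => hn; apply/hxy/functional_extensionality => i.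
    by apply: NNPP => h; apply: hn; exists i.
  by exists i.+1 => c; apply/hi/c.
apply: NNPP => hn; apply: hk => x y i _.
by case: (classic (F x = F y)) => [-> // | hxy]; case: hn; exists x, y.
Qed.

Lemma lcp_sizeP F : nonconstant F ->
  common_prefix (lcp_size F) F /\ ~ common_prefix (lcp_size F).+1 F.
Proof.
move=> /nonconstantP [k hk].
suff ex : exists j, common_prefix j F /\ ~ common_prefix j.+1 F by exact: epsilon_spec ex.
elim: k hk => [|k IH] hk; first by case: hk => x y i.
by case: (classic (common_prefix k F)) => [h | /IH//]; exists k.
Qed.

Lemma lcp_size_max F k : nonconstant F -> common_prefix k F -> k <= lcp_size F.
Proof.
move=> hF hk; have [_ hmax] := lcp_sizeP hF.
by case: leqP => // hlt; case: hmax; apply: common_prefix_le hk.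
Qed.

Lemma lcp_size_unique F k : common_prefix k F -> ~ common_prefix k.+1 F -> lcp_size F = k.
Proof.
move=> h1 h2; have hF : nonconstant F by apply/nonconstantP; exists k.+1.
have [s1 s2] := lcp_sizeP hF; have := lcp_size_max hF h1.
by case: (leqP (lcp_size F) k) => [|hlt]; [lia | case: h2; apply: common_prefix_le s1].
Qed.

Lemma lcp_decomp F x : nonconstant F -> F x = prepend (lcp F) (strip_lcp F x).
Proof.
move=> hF; have [c _] := lcp_sizeP hF.
by rewrite /lcp /strip_lcp (proj1 (agree_ctake _ _ _) (c zeros x)) prepend_ctake_shift.
Qed.

Lemma strip_lcp_first_letter F : nonconstant F -> exists x y, strip_lcp F x 0 <> strip_lcp F y 0.
Proof.
move=> hF; have [c hmax] := lcp_sizeP hF.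
apply: NNPP => hn; apply: hmax; rewrite -addn1; apply: common_prefix_shift c _ => x y [|//] _.
by apply: NNPP => hxy; apply: hn; exists x, y.
Qed.

Lemma nonconstant_prepend w G : nonconstant (fun x => prepend w (G x)) <-> nonconstant G.
Proof.
by split=> -[x [y h]]; exists x, y; [move=> e; apply: h; rewrite /= e | move/prepend_inj].
Qed.

Lemma common_prefix_prepend w k G :
  common_prefix (size w + k) (fun x => prepend w (G x)) <-> common_prefix k G.
Proof. by split=> h x y; apply/agree_prepend/h. Qed.

Lemma lcp_size_prepend w G : nonconstant G ->
  lcp_size (fun x => prepend w (G x)) = size w + lcp_size G.
Proof.
move=> hG; have [h1 h2] := lcp_sizeP hG.
by apply: lcp_size_unique; [apply/common_prefix_prepend | rewrite -addnS => /common_prefix_prepend].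
Qed.

Lemma strip_lcp_prepend F G w : (forall x, F x = prepend w (G x)) -> nonconstant G ->
  strip_lcp F = strip_lcp G.
Proof.
move=> /functional_extensionality -> hG; apply: functional_extensionality => x.
by rewrite /strip_lcp lcp_size_prepend // -shiftD shift_prepend.
Qed.

Lemma lcp_prepend F G w : (forall x, F x = prepend w (G x)) -> nonconstant G ->
  lcp F = w ++ lcp G.
Proof.
by move=> /functional_extensionality -> hG; rewrite /lcp lcp_size_prepend // ctake_prependD.
Qed.

Lemma strip_lcp_prepend_nonconstant F G w : (forall x, F x = prepend w (G x)) -> nonconstant F ->
  strip_lcp F = strip_lcp G.
Proof.
move=> hFG hF; apply: (strip_lcp_prepend hFG).
by apply/(nonconstant_prepend w); case: hF => x [y h]; exists x, y; rewrite -!hFG.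
Qed.

Lemma lcp_size_strip_lcp F : nonconstant F -> lcp_size (strip_lcp F) = 0.
Proof.
move=> hF; have [h1 h2] := lcp_sizeP hF.
apply: lcp_size_unique => [x y i // | h]; apply: h2.
by rewrite -addn1; apply: common_prefix_shift h1 h.
Qed.

Definition residual (f : cantor -> cantor) (u : seq bool) : cantor -> cantor :=
  strip_lcp (fun x => f (prepend u x)).

Lemma inj_nonconstant_prepend f u : injective f -> nonconstant (fun x => f (prepend u x)).
Proof.
move=> hf; exists zeros, (fun _ => true) => /hf /prepend_inj e.
by have := f_equal (fun g => g 0) e.
Qed.

Lemma inj_nonconstant f : injective f -> nonconstant f.
Proof.
move=> /(@inj_nonconstant_prepend _ [::]).
by rewrite (functional_extensionality _ f (fun y => congr1 f (prepend_nil y))).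
Qed.

Lemma residual_decomp f u x : injective f ->
  f (prepend u x) = prepend (lcp (fun y => f (prepend u y))) (residual f u x).
Proof. by move=> hf; apply: lcp_decomp; apply: inj_nonconstant_prepend. Qed.

Lemma residual_nil f x : injective f -> f x = prepend (lcp f) (residual f [::] x).
Proof.
move=> hf; have e : (fun y => f (prepend [::] y)) = f.
  by apply: functional_extensionality => y; rewrite prepend_nil.
by rewrite /residual e; apply: lcp_decomp; apply: inj_nonconstant.
Qed.

Lemma residual_inj f u : injective f -> injective (residual f u).
Proof.
by move=> hf y1 y2 e; apply: (@prepend_inj u); apply: (hf); rewrite !(residual_decomp _ _ hf) e.
Qed.

Lemma residual_cat f u v : injective f -> residual (residual f u) v = residual f (u ++ v).
Proof.
move=> hf; rewrite /residual; symmetry.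
apply: (strip_lcp_prepend (w := lcp (fun y => f (prepend u y)))); last first.
  exact: inj_nonconstant_prepend (residual_inj hf).
by move=> x; rewrite -prepend_cat (residual_decomp _ _ hf).
Qed.

(** * Rational maps are the maps with finitely many residuals *)

Definition finitely_many (T : Type) (P : T -> Prop) : Prop :=
  exists (I : finType) (L : I -> T), forall x, P x -> exists i, x = L i.

Section FinitelyMany.
Variable T : Type.
Implicit Types P Q : T -> Prop.

Lemma finitely_many_sub P Q : finitely_many Q -> (forall x, P x -> Q x) -> finitely_many P.
Proof. by move=> [I [L hL]] hPQ; exists I, L => x /hPQ /hL. Qed.

Lemma finitely_many1 (x0 : T) : finitely_many (fun x => x = x0).
Proof. by exists unit, (fun _ => x0) => x ->; exists tt. Qed.

Lemma finitely_manyU P Q :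
  finitely_many P -> finitely_many Q -> finitely_many (fun x => P x \/ Q x).
Proof.
move=> [I [L hL]] [J [M hM]].
exists (I + J)%type, (fun k => match k with inl i => L i | inr j => M j end).
by move=> x [/hL [i ->] | /hM [j ->]]; [exists (inl i) | exists (inr j)].
Qed.

Lemma finitely_many_image2 U V (P : U -> Prop) (Q : V -> Prop) (g : U -> V -> T) :
  finitely_many P -> finitely_many Q ->
  finitely_many (fun y => exists a b, [/\ P a, Q b & y = g a b]).
Proof.
move=> [I [L hL]] [J [M hM]]; exists (I * J)%type, (fun k => g (L k.1) (M k.2)).
by move=> y [a [b [/hL [i ->] /hM [j ->] ->]]]; exists (i, j).
Qed.

Lemma finitely_many_image U (P : U -> Prop) (g : U -> T) :
  finitely_many P -> finitely_many (fun y => exists a, P a /\ y = g a).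
Proof.
by move=> [I [L hL]]; exists I, (fun i => g (L i)) => y [a [/hL [i ->] ->]]; exists i.
Qed.
End FinitelyMany.

Lemma finitely_many_words d : finitely_many (fun w : seq bool => size w <= d).
Proof.
elim: d => [|d IH]; first by apply: (finitely_many_sub (finitely_many1 [::])) => -[].
have bools : finitely_many (fun _ : bool => True) by exists bool, id => b; exists b.
apply: (finitely_many_sub
  (finitely_manyU (finitely_many1 [::]) (finitely_many_image2 cons bools IH))).
by move=> [|b w] hw; [left | right; exists b, w].
Qed.

Definition residual_finite (f : cantor -> cantor) : Prop :=
  finitely_many (fun F => exists u, F = residual f u).

Section TransducerRuns.
Variables (S : finType) (t : S -> bool -> S) (o : S -> bool -> seq bool).

Fixpoint state_after (s : S) (u : seq bool) : S :=
  if u is b :: u' then state_after (t s b) u' else s.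

Fixpoint output_of (s : S) (u : seq bool) : seq bool :=
  if u is b :: u' then o s b ++ output_of (t s b) u' else [::].

Lemma state_atS s x n : state_at s t x n.+1 = state_at (t s (x 0)) t (shift 1 x) n.
Proof. by elim: n => //= n ->. Qed.

Lemma out_prefixS s x n :
  out_prefix s t o x n.+1 = o s (x 0) ++ out_prefix (t s (x 0)) t o (shift 1 x) n.
Proof.
elim: n => [|n IH]; first by rewrite /= cats0.
have -> : out_prefix s t o x n.+2 = out_prefix s t o x n.+1 ++ o (state_at s t x n.+1) (x n.+1).
  by [].
by rewrite IH -catA state_atS.
Qed.

Lemma out_prefix_prepend s u x n :
  out_prefix s t o (prepend u x) (size u + n) =
  output_of s u ++ out_prefix (state_after s u) t o x n.
Proof.
elim: u s => [|b u IH] s; first by rewrite prepend_nil.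
by rewrite addSn out_prefixS shift1_cons IH catA.
Qed.

Lemma out_prefixD s x n m : exists w, out_prefix s t o x (n + m) = out_prefix s t o x n ++ w.
Proof.
elim: m => [|m [w hw]]; first by exists [::]; rewrite addn0 cats0.
by rewrite addnS /= hw -catA; eexists.
Qed.

Lemma nth_out_prefix s x n m i :
  i < size (out_prefix s t o x n) -> i < size (out_prefix s t o x m) ->
  nth false (out_prefix s t o x n) i = nth false (out_prefix s t o x m) i.
Proof.
wlog le_nm : n m / n <= m.
  move=> W h1 h2; case: (leqP n m) => hnm; first exact: W.
  by symmetry; apply: W => //; lia.
move=> h1 _; have [w] := out_prefixD s x n (m - n).
by rewrite subnKC // => ->; rewrite nth_cat h1.
Qed.

Definition output_map (s : S) (x : cantor) : cantor := fun i =>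
  epsilon (inhabits false) (fun b =>
    exists n, i < size (out_prefix s t o x n) /\ nth false (out_prefix s t o x n) i = b).

Lemma output_mapE s x n i :
  i < size (out_prefix s t o x n) -> output_map s x i = nth false (out_prefix s t o x n) i.
Proof.
move=> hi; rewrite /output_map.
have ex : exists b m,
    i < size (out_prefix s t o x m) /\ nth false (out_prefix s t o x m) i = b.
  by eexists; exists n.
have [m [hm <-]] := epsilon_spec (inhabits false) _ ex.
exact: nth_out_prefix hm hi.
Qed.
End TransducerRuns.

Lemma transducer_output_prepend S s0 t o (f : cantor -> cantor) :
  (forall psi, transducer_output (S := S) s0 t o psi (f psi)) ->
  forall u x,
  f (prepend u x) = prepend (output_of t o s0 u) (output_map t o (state_after t s0 u) x).
Proof.
move=> hf u x; apply: functional_extensionality => i.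
have [hnth hunb] := hf (prepend u x).
have [n hn] := hunb i.+1; have [w hw] := out_prefixD t o s0 (prepend u x) n (size u).
have hi : i < size (out_prefix s0 t o (prepend u x) (size u + n)) by rewrite addnC hw size_cat; lia.
rewrite -(hnth _ _ hi); move: hi; rewrite out_prefix_prepend nth_cat size_cat => hi.
case: ltnP => hu; first by rewrite prepend_lt.
by rewrite prepend_ge // (output_mapE (n := n)) //; lia.
Qed.

Lemma rational_residual_finite f : rational_map f -> injective f -> residual_finite f.
Proof.
move=> [S [s0 [t [o hf]]]] f_inj.
exists S, (fun s => strip_lcp (output_map t o s)) => F [u ->]; exists (state_after t s0 u).
have hu := transducer_output_prepend hf u.
apply: (strip_lcp_prepend hu); apply/(nonconstant_prepend (output_of t o s0 u)).
by have := inj_nonconstant_prepend u f_inj; rewrite (functional_extensionality _ _ hu).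
Qed.

Lemma rational_map_prepend w F : rational_map F -> rational_map (fun x => prepend w (F x)).
Proof.
move=> [S [s0 [t [o hF]]]].
(* A fresh initial state emits [w] before the first output of [s0]. *)
pose t' (s : option S) b := Some (t (odflt s0 s) b).
pose o' (s : option S) b := if s is Some s1 then o s1 b else w ++ o s0 b.
exists (option S : finType), None, t', o' => psi.
have state' n : state_at None t' psi n.+1 = Some (state_at s0 t psi n.+1).
  by elim: n => //= n ->.
have out' n : out_prefix None t' o' psi n.+1 = w ++ out_prefix s0 t o psi n.+1.
  elim: n => // n IH.
  have -> : out_prefix None t' o' psi n.+2 =
    out_prefix None t' o' psi n.+1 ++ o' (state_at None t' psi n.+1) (psi n.+1) by [].
  by rewrite IH state' -catA.
have [hnth hunb] := hF psi; split.
  case=> [//|n] i; rewrite out' size_cat nth_cat => hi.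
  case: ltnP => hw; first by rewrite prepend_lt.
  by rewrite prepend_ge // hnth //; lia.
move=> k; have [n hn] := hunb k; exists n.+1.
have [v] := out_prefixD t o s0 psi n 1; rewrite addn1 out' => ->.
by rewrite !size_cat; lia.
Qed.

(* A transducer whose states index the residuals of [g]: reading [b] in state [L i] moves to the
   residual of [L i] at [b] and emits the prefix that the letter [b] forces. *)
Section ResidualTransducer.
Variables (g : cantor -> cantor) (I : finType) (L : I -> cantor -> cantor) (s0 : I).
Hypotheses (g_inj : injective g) (g_cont : cantor_continuous g) (g_lcp : lcp_size g = 0).
Hypotheses (L_residual : forall u, exists i, residual g u = L i) (L_s0 : L s0 = residual g [::]).

Definition residual_step (i : I) (b : bool) : I :=
  epsilon (inhabits i) (fun j => L j = residual (L i) [:: b]).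

Definition residual_output (i : I) (b : bool) : seq bool :=
  lcp (fun x => L i (prepend [:: b] x)).

Lemma residual_run psi n :
  L (state_at s0 residual_step psi n) = residual g (ctake n psi) /\
  out_prefix s0 residual_step residual_output psi n = lcp (fun x => g (prepend (ctake n psi) x)).
Proof.
elim: n => [|n [IHs IHo]].
  have -> : (fun x => g (prepend (ctake 0 psi) x)) = g.
    by apply: functional_extensionality => x; rewrite prepend_nil.
  by rewrite /lcp g_lcp.
set s := state_at s0 residual_step psi n.
have res_next : residual (L s) [:: psi n] = residual g (ctake n.+1 psi).
  by rewrite IHs residual_cat // ctakeS cats1.
split.
  have [j hj] := L_residual (ctake n.+1 psi).
  have ex : exists j, L j = residual (L s) [:: psi n] by exists j; rewrite res_next hj.
  by rewrite /= -/s -res_next; exact: epsilon_spec ex.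
have decomp x : g (prepend (ctake n.+1 psi) x) =
    prepend (lcp (fun y => g (prepend (ctake n psi) y))) (L s (prepend [:: psi n] x)).
  by rewrite ctakeS -cats1 -prepend_cat (residual_decomp _ _ g_inj) IHs.
rewrite [out_prefix _ _ _ _ _]/= -/s IHo (lcp_prepend decomp) //.
by rewrite IHs; exact: inj_nonconstant_prepend (residual_inj g_inj).
Qed.

Lemma residual_transducer_output psi :
  transducer_output s0 residual_step residual_output psi (g psi).
Proof.
split=> [n i | k].
  have [_ ->] := residual_run psi n => hi.
  by rewrite -{2}(prepend_ctake_shift n psi) (residual_decomp _ _ g_inj) prepend_lt.
have [m hm] := g_cont psi k; exists m.
have [_ ->] := residual_run psi m; rewrite /lcp size_ctake.
apply: lcp_size_max; first exact: inj_nonconstant_prepend.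
move=> x y; apply: (@agree_trans _ _ (g psi)).
  by apply/agree_sym/hm/agree_ctake_prepend.
exact/hm/agree_ctake_prepend.
Qed.
End ResidualTransducer.

Lemma residual_finite_rational f :
  injective f -> cantor_continuous f -> residual_finite f -> rational_map f.
Proof.
move=> f_inj f_cont [I [L hL]].
set g := residual f [::].
have fE x : f x = prepend (lcp f) (g x) by exact: residual_nil.
have g_inj : injective g by exact: residual_inj.
have -> : f = (fun x => prepend (lcp f) (g x)) by exact: functional_extensionality.
apply: rational_map_prepend.
have g_res u : residual g u = residual f u by rewrite residual_cat.
have L_res u : exists i, residual g u = L i by rewrite g_res; apply: hL; exists u.
have [s0 hs0] := L_res [::].
exists I, s0, (residual_step L), (residual_output L) => psi.
apply: residual_transducer_output => //.
- move=> x n; have [m hm] := f_cont x (size (lcp f) + n); exists m => y /hm.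
  by rewrite !fE => /agree_prepend.
- exact: lcp_size_strip_lcp (inj_nonconstant_prepend _ f_inj).
Qed.

(** * Closure under composition and inversion *)

Lemma residual_finite_comp f h : injective f -> injective h ->
  residual_finite f -> residual_finite h -> residual_finite (f \o h).
Proof.
move=> f_inj h_inj Ff Fh.
apply: (finitely_many_sub (finitely_many_image2 (fun A B => strip_lcp (A \o B)) Ff Fh)).
move=> F [u ->]; set P := lcp (fun x => h (prepend u x)).
exists (residual f P), (residual h u); split; [by exists P | by exists u |].
apply: (strip_lcp_prepend_nonconstant (w := lcp (fun y => f (prepend P y)))).
  by move=> x /=; rewrite (residual_decomp _ _ h_inj) (residual_decomp _ _ f_inj).
exact: inj_nonconstant_prepend (inj_comp f_inj h_inj).
Qed.

Section Fan.
Variable Q : seq bool -> Prop.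
Hypothesis Q_prefix_closed : forall w1 w2, Q (w1 ++ w2) -> Q w1.

Definition extendable (w : seq bool) : Prop := forall k, exists w', size w' = k /\ Q (w ++ w').

Lemma extendable_rcons w : extendable w -> exists b, extendable (rcons w b).
Proof.
move=> hw; apply: NNPP => hn.
have [n0 hn0] : exists k, ~ exists w', size w' = k /\ Q (rcons w false ++ w').
  by apply: not_all_ex_not => h; apply: hn; exists false.
have [n1 hn1] : exists k, ~ exists w', size w' = k /\ Q (rcons w true ++ w').
  by apply: not_all_ex_not => h; apply: hn; exists true.
have [[|b w'] [//= [hs] hQ]] := hw (maxn n0 n1).+1.
have {}hQ : Q (rcons w b ++ w') by rewrite -cats1 -catA.
have take_ext k : k <= size w' -> exists w'', size w'' = k /\ Q (rcons w b ++ w'').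
  move=> hk; exists (take k w'); split; first by rewrite size_takel.
  by apply: (Q_prefix_closed (w2 := drop k w')); rewrite -catA cat_take_drop.
by case: b hQ take_ext => _ ext; [apply: hn1 | apply: hn0]; apply: ext; lia.
Qed.

Definition branch_step (w : seq bool) : seq bool :=
  rcons w (epsilon (inhabits false) (fun b => extendable (rcons w b))).

Definition branch (n : nat) : seq bool := iter n branch_step [::].

Lemma size_branch n : size (branch n) = n.
Proof. by elim: n => //= n IH; rewrite size_rcons IH. Qed.

Lemma nth_branch n i : i < n -> nth false (branch n) i = nth false (branch i.+1) i.
Proof.
elim: n => // n IH hi; rewrite [branch n.+1]/= /branch_step nth_rcons size_branch.
case: ltnP => [/IH // | hni]; have -> : i = n by lia.
by rewrite eqxx /= /branch_step nth_rcons size_branch ltnn eqxx.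
Qed.

Lemma extendable_branch n : extendable [::] -> extendable (branch n).
Proof.
move=> h0; elim: n => //= n IH.
have [b hb] := extendable_rcons IH.
exact: (epsilon_spec (inhabits false) (fun b => extendable (rcons (branch n) b)) (ex_intro _ b hb)).
Qed.

Lemma fan : (forall x, exists n, ~ Q (ctake n x)) -> exists d, forall w, size w = d -> ~ Q w.
Proof.
move=> hx; apply: NNPP => hn.
have h0 : extendable [::].
  move=> d; apply: NNPP => h1; apply: hn; exists d => w hw hQ; apply: h1; by exists w.
pose x i := nth false (branch i.+1) i.
have [n hQ] := hx x; apply: hQ.
have -> : ctake n x = branch n.
  apply: (@eq_from_nth _ false); rewrite ?size_ctake ?size_branch // => i hi.
  by rewrite nth_ctake // nth_branch.
by have [w' [/size0nil -> hQ]] := extendable_branch n h0 0; rewrite cats0 in hQ.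
Qed.
End Fan.

Lemma uniform_of_local (E : cantor -> cantor -> Prop) :
  (forall x, exists m, forall y z, agree m x y -> agree m x z -> E y z) ->
  exists d, forall y z, agree d y z -> E y z.
Proof.
move=> hloc.
pose Q w := exists y z, [/\ ctake (size w) y = w, ctake (size w) z = w & ~ E y z].
have [d hd] : exists d, forall w, size w = d -> ~ Q w.
  apply: fan => [w1 w2 [y [z [hy hz nE]]] | x].
    have hle : size w1 <= size (w1 ++ w2) by rewrite size_cat leq_addr.
    by exists y, z; rewrite !(ctake_take _ hle) hy hz take_size_cat.
  have [m hm] := hloc x; exists m => -[y [z []]]; rewrite size_ctake => hy hz; apply.
  by apply: hm; apply/agree_ctake; [rewrite hy | rewrite hz].
exists d => y z /agree_ctake hyz; apply: NNPP => nE.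
by apply: (hd (ctake d y)); rewrite ?size_ctake //; exists y, z; rewrite size_ctake.
Qed.

Lemma uniform_continuity f : cantor_continuous f ->
  forall n, exists m, forall x y, agree m x y -> agree n (f x) (f y).
Proof.
move=> f_cont n; apply: uniform_of_local => x; have [m hm] := f_cont x n.
by exists m => y z /hm hy /hm hz; apply: agree_trans (agree_sym hy) hz.
Qed.

Lemma uniformly_locally_constant (P : cantor -> bool) :
  (forall x, exists m, forall y, agree m x y -> P y = P x) ->
  exists d, forall x y, agree d x y -> P x = P y.
Proof.
move=> hP; apply: uniform_of_local => x; have [m hm] := hP x.
by exists m => y z /hm -> /hm ->.
Qed.

Definition branching (R : cantor -> cantor) (w : seq bool) : Prop :=
  exists y z, [/\ y 0 <> z 0, ctake (size w) (R y) = w & ctake (size w) (R z) = w].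

Lemma residual_branching_bounded f g u : cancel f g -> cantor_continuous g ->
  exists d, forall w, branching (residual f u) w -> size w < d.
Proof.
move=> fK g_cont; have f_inj := can_inj fK.
have [m hm] := uniform_continuity g_cont (size u).+1.
exists m => w [y [z [yz hy hz]]]; rewrite ltnNge; apply/negP => hwm; apply: yz.
set P := lcp (fun x => f (prepend u x)).
have : agree (size P + size w) (f (prepend u y)) (f (prepend u z)).
  by rewrite !(residual_decomp _ _ f_inj); apply/agree_prepend/agree_ctake; rewrite hy hz.
move=> /(agree_le (leq_trans hwm (leq_addl _ _))) /hm; rewrite !fK.
by move=> /(_ (size u) (ltnSn _)); rewrite !prepend_ge // subnn.
Qed.

Definition preimage_prepend (R : cantor -> cantor) (w : seq bool) (x : cantor) : cantor :=
  epsilon (inhabits zeros) (fun y => R y = prepend w x).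

(* With u the prefix forced by g on the cylinder v, the prefix forced by f on u is a prefix P of
   v = P ++ v', and the residual of g at v inverts the residual R of f at u behind v'.  Because
   the values of the residual of g at v differ in their first letter, v' is branching for R. *)
Lemma residual_inverse f g v : cancel f g -> cancel g f ->
  let R := residual f (lcp (fun x => g (prepend v x))) in
  exists v', residual g v = preimage_prepend R v' /\ branching R v'.
Proof.
move=> fK gK R; have f_inj := can_inj fK; have g_inj := can_inj gK.
set u := lcp (fun x => g (prepend v x)); set P := lcp (fun y => f (prepend u y)).
have vE x : prepend v x = prepend P (R (residual g v x)).
  by rewrite -residual_decomp // -residual_decomp // gK.
have hPv : size P <= size v.
  rewrite leqNgt; apply/negP => hvP.
  have := congr1 (fun z => z (size v)) (vE (fun _ => ~~ nth false P (size v))).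
  by rewrite /= prepend_ge // prepend_lt //; case: (nth false P (size v)).
set v' := drop (size P) v.
have vP : v = P ++ v'.
  have := congr1 (ctake (size P)) (vE zeros).
  by rewrite ctake_prepend ctake_prepend_take // => e; rewrite -{1}(cat_take_drop (size P) v) e.
have v'E x : prepend v' x = R (residual g v x).
  by apply: (@prepend_inj P); rewrite prepend_cat -vP vE.
exists v'; split.
  apply: functional_extensionality => x; apply: (residual_inj (u := u) f_inj).
  have ex : exists y, R y = prepend v' x by exists (residual g v x).
  by rewrite -/R -v'E; symmetry; exact: (epsilon_spec _ _ ex).
have [x1 [x2 hx]] := strip_lcp_first_letter (inj_nonconstant_prepend v g_inj).
by exists (residual g v x1), (residual g v x2); rewrite -!v'E !ctake_prepend.
Qed.

Lemma residual_finite_inverse f g : cancel f g -> cancel g f -> cantor_continuous g ->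
  residual_finite f -> residual_finite g.
Proof.
move=> fK gK g_cont [I [L hL]].
pose d i := epsilon (inhabits 0) (fun d => forall w, branching (L i) w -> size w < d).
pose D := \max_(i : I) d i.
have Ls : finitely_many (fun R => exists i, R = L i) by exists I, L.
apply: (finitely_many_sub (finitely_many_image2 preimage_prepend Ls (finitely_many_words D))).
move=> G [v ->]; have [v' [-> hbr]] := residual_inverse v fK gK.
set R := residual f _ in hbr *; have [i Ri] := hL R (ex_intro _ _ erefl).
exists R, v'; split => //; first by exists i.
have d_spec : forall w, branching (L i) w -> size w < d i.
  have [e he] := residual_branching_bounded (lcp (fun x => g (prepend v x))) fK g_cont.
  apply: (epsilon_spec (inhabits 0) (fun d => forall w, branching (L i) w -> size w < d)).
  by exists e; rewrite -Ri.
by move: hbr; rewrite Ri => /d_spec/leq_trans/(_ (leq_bigmax i))/ltnW.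
Qed.

Lemma continuous_id : cantor_continuous id.
Proof. by move=> x n; exists n. Qed.

Lemma continuous_comp f h :
  cantor_continuous f -> cantor_continuous h -> cantor_continuous (f \o h).
Proof.
move=> f_cont h_cont x n; have [m1 h1] := f_cont (h x) n; have [m2 h2] := h_cont x m1.
by exists m2 => y /h2 /h1.
Qed.

Lemma continuous_prepend w : cantor_continuous (prepend w).
Proof.
by move=> x n; exists n => y hxy; apply: (agree_le (leq_addl (size w) n)); apply/agree_prepend.
Qed.

Lemma continuous_shift k f : cantor_continuous f -> cantor_continuous (fun x => shift k (f x)).
Proof.
move=> f_cont x n; have [m hm] := f_cont x (k + n); exists m => y /hm h i hi.
by apply: h; rewrite ltn_add2l.
Qed.

Lemma homeomorphism_inj f : homeomorphism f -> injective f.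
Proof. by move=> [g [gf _]]; exact: can_inj gf. Qed.

Lemma RHE f : RH f <-> homeomorphism f /\ residual_finite f.
Proof.
split=> -[hf rf]; split=> //.
  by apply: rational_residual_finite rf (homeomorphism_inj hf).
by apply: residual_finite_rational rf; [exact: homeomorphism_inj | case: hf => g [_ [_ []]]].
Qed.

Lemma RH_comp f h : RH f -> RH h -> RH (f \o h).
Proof.
move=> /RHE [[f' [fK [f'K [fc f'c]]]] Ff] /RHE [[h' [hK [h'K [hc h'c]]]] Fh].
apply/RHE; split; last by apply: residual_finite_comp Ff Fh; exact: can_inj.
exists (h' \o f'); split; first by move=> x /=; rewrite fK hK.
by split; [move=> x /=; rewrite h'K f'K | split; exact: continuous_comp].
Qed.

Lemma RH_inv f f' : RH f -> cancel f' f -> cancel f f' -> RH f'.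
Proof.
move=> /RHE [[g [gf [fg [fc gc]]]] Ff] f'K fK.
have -> : f' = g by apply: functional_extensionality => x; rewrite -[in LHS](fg x) fK.
by apply/RHE; split; [exists f | exact: residual_finite_inverse gf fg gc Ff].
Qed.

Definition prefix_replacement (d : nat) (F : cantor -> cantor) : Prop :=
  forall u, size u = d -> exists w, forall y, F (prepend u y) = prepend w y.

Lemma prefix_replacement_continuous d F : prefix_replacement d F -> cantor_continuous F.
Proof.
move=> hF x n; exists (d + n) => y hxy.
have [w hw] := hF (ctake d x) (size_ctake d x).
have e : ctake d y = ctake d x by apply/esym/agree_ctake/(agree_le (leq_addr n d) hxy).
rewrite -(prepend_ctake_shift d x) -(prepend_ctake_shift d y) e !hw.
apply: (agree_le (leq_addl (size w) n)); apply/agree_prepend => i hi.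
by apply: hxy; rewrite ltn_add2l.
Qed.

Lemma prefix_replacement_residual_finite d F : prefix_replacement d F -> residual_finite F.
Proof.
move=> hF.
apply: (finitely_many_sub (finitely_manyU (finitely_many1 (strip_lcp id))
  (finitely_many_image (residual F) (finitely_many_words d)))).
move=> G [u ->]; case: (leqP d (size u)) => hu; last by right; exists u; split => //; exact: ltnW.
left; have [w hw] := hF (take d u) (size_takel hu).
apply: (strip_lcp_prepend (w := w ++ drop d u)); last exact: inj_nonconstant.
by move=> x; rewrite -{1}(cat_take_drop d u) -prepend_cat hw prepend_cat.
Qed.

Lemma RH_prefix_replacement d d' F F' : prefix_replacement d F -> prefix_replacement d' F' ->
  cancel F' F -> cancel F F' -> RH F.
Proof.
move=> hF hF' F'K FK; apply/RHE; split; last exact: prefix_replacement_residual_finite hF.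
exists F'; do 3 split => //.
  exact: prefix_replacement_continuous hF.
exact: prefix_replacement_continuous hF'.
Qed.

Lemma RH_id : RH id.
Proof. by apply: (@RH_prefix_replacement 0 0) => // u /size0nil ->; exists [::]. Qed.

Lemma size3P (u : seq bool) : size u = 3 -> exists a b c, u = [:: a; b; c].
Proof. by case: u => [|a [|b [|c []]]] //; exists a, b, c. Qed.

Lemma size2P (u : seq bool) : size u = 2 -> exists a b, u = [:: a; b].
Proof. by case: u => [|a [|b []]] //; exists a, b. Qed.

(** * Elements fixing a cylinder are commutators *)

(* [copy_shift] maps the cylinders 0, 10, 110, 111 onto 101, 100, 0, 11, hence each cylinder of
   the list 110, 0, 101, 1001, 10001, ... onto the next one. *)
Definition copy_shift (x : cantor) : cantor :=
  if x 0 then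
    if x 1 then
      if x 2 then prepend [:: true; true] (shift 3 x) else prepend [:: false] (shift 3 x)
    else prepend [:: true; false; false] (shift 2 x)
  else prepend [:: true; false; true] (shift 1 x).

Definition copy_shift_inv (x : cantor) : cantor :=
  if x 0 then
    if x 1 then prepend [:: true; true; true] (shift 2 x)
    else (if x 2 then prepend [:: false] (shift 3 x) else prepend [:: true; false] (shift 3 x))
  else prepend [:: true; true; false] (shift 1 x).

Lemma copy_shiftK : cancel copy_shift copy_shift_inv.
Proof.
move=> x; rewrite (prepend_ctake3 x); move: (x 0) (x 1) (x 2) (shift 3 x) => a b c y.
by case: a; case: b; case: c; rewrite /copy_shift /copy_shift_inv; prepend_simpl.
Qed.

Lemma copy_shift_invK : cancel copy_shift_inv copy_shift.
Proof.
move=> x; rewrite (prepend_ctake3 x); move: (x 0) (x 1) (x 2) (shift 3 x) => a b c y.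
by case: a; case: b; case: c; rewrite /copy_shift /copy_shift_inv; prepend_simpl.
Qed.

Lemma RH_copy_shift_inv : RH copy_shift_inv.
Proof.
apply: (@RH_prefix_replacement 3 3 _ copy_shift _ _ copy_shiftK copy_shift_invK);
  move=> u /size3P [a [b [c ->]]];
  by case: a; case: b; case: c; rewrite /copy_shift /copy_shift_inv; prepend_simpl;
     eexists => y; prepend_simpl.
Qed.

Lemma copy_shift_false u y :
  copy_shift (prepend (false :: u) y) = prepend [:: true; false; true] (prepend u y).
Proof. by rewrite /copy_shift; prepend_simpl. Qed.

Lemma copy_shift_true_false u y :
  copy_shift (prepend [:: true, false & u] y) = prepend [:: true; false; false] (prepend u y).
Proof. by rewrite /copy_shift; prepend_simpl. Qed.

Lemma copy_shift_true_true_false u y :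
  copy_shift (prepend [:: true, true, false & u] y) = prepend [:: false] (prepend u y).
Proof. by rewrite /copy_shift; prepend_simpl. Qed.

Lemma copy_shift_true_true_true u y :
  copy_shift (prepend [:: true, true, true & u] y) = prepend [:: true; true] (prepend u y).
Proof. by rewrite /copy_shift; prepend_simpl. Qed.

Definition push_one (x : cantor) : cantor :=
  if x 0 then prepend [:: true; true] (shift 1 x)
  else if x 1 then prepend [:: true; false] (shift 2 x) else prepend [:: false] (shift 2 x).

Definition push_one_inv (x : cantor) : cantor :=
  if x 0 then (if x 1 then prepend [:: true] (shift 2 x) else prepend [:: false; true] (shift 2 x))
  else prepend [:: false; false] (shift 1 x).

Lemma push_oneK : cancel push_one push_one_inv.
Proof.
move=> x; rewrite (prepend_ctake2 x); move: (x 0) (x 1) (shift 2 x) => a b y.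
by case: a; case: b; rewrite /push_one /push_one_inv; prepend_simpl.
Qed.

Lemma push_one_invK : cancel push_one_inv push_one.
Proof.
move=> x; rewrite (prepend_ctake2 x); move: (x 0) (x 1) (shift 2 x) => a b y.
by case: a; case: b; rewrite /push_one /push_one_inv; prepend_simpl.
Qed.

Lemma RH_push_one : RH push_one.
Proof.
apply: (@RH_prefix_replacement 2 2 _ push_one_inv _ _ push_one_invK push_oneK);
  move=> u /size2P [a [b ->]];
  by case: a; case: b; rewrite /push_one /push_one_inv; prepend_simpl; eexists => y; prepend_simpl.
Qed.

Lemma push_one_cons u y : push_one (prepend (true :: u) y) = prepend [:: true, true & u] y.
Proof. by rewrite /push_one; prepend_simpl. Qed.

Definition flip (m : seq bool) (x : cantor) : cantor := fun i => x i (+) nth false m i.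

Lemma flipK m : involutive (flip m).
Proof. by move=> x; apply: functional_extensionality => i; rewrite /flip -addbA addbb addbF. Qed.

Lemma RH_flip m : RH (flip m).
Proof.
have hm : prefix_replacement (size m) (flip m).
  move=> u hu; exists (mkseq (fun i => nth false u i (+) nth false m i) (size m)) => y.
  apply: functional_extensionality => i; rewrite /flip.
  case: (ltnP i (size m)) => hi; first by rewrite !prepend_lt ?size_mkseq ?hu // nth_mkseq.
  by rewrite !prepend_ge ?size_mkseq ?hu // (nth_default false hi) addbF.
exact: (RH_prefix_replacement hm hm (flipK m) (flipK m)).
Qed.

Lemma flip_ones w y : flip (map negb w) (prepend (nseq (size w) true) y) = prepend w y.
Proof.
apply: functional_extensionality => i; rewrite /flip.
case: (ltnP i (size w)) => hi.
  by rewrite !prepend_lt ?size_nseq // nth_nseq hi (nth_map false) //; case: (nth false w i).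
by rewrite !prepend_ge ?size_nseq // nth_default ?size_map // addbF.
Qed.

Definition first_one_word (j : nat) : seq bool := rcons (nseq j false) true.

Lemma size_first_one_word j : size (first_one_word j) = j.+1.
Proof. by rewrite size_rcons size_nseq. Qed.

Lemma prepend_first_one_word j y i :
  prepend (first_one_word j) y i = (i == j) || (j < i) && y (i - j.+1).
Proof.
rewrite /prepend size_first_one_word /first_one_word nth_rcons size_nseq.
case: (ltngtP i j) => [hij | hji | ->] /=; last by rewrite ltnSn.
  by rewrite ltnS ltnW // nth_nseq hij.
by rewrite ltnNge hji.
Qed.

Lemma word_first_one (u : seq bool) :
  u = nseq (size u) false \/ exists j u', u = first_one_word j ++ u'.
Proof.
elim: u => [|[] u IH]; [by left | by right; exists 0, u |].
case: IH => [e | [j [u' e]]]; first by left; rewrite /= -e.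
by right; exists j.+1, u'; rewrite e.
Qed.

Lemma cantor_first_one x :
  (forall j, x j = false) \/ exists j y, x = prepend (first_one_word j) y.
Proof.
case: (classic (exists j, x j)) => [ex | hn]; last first.
  by left=> j; apply/negbTE/negP => xj; apply: hn; exists j.
right; exists (ex_minn ex), (shift (ex_minn ex).+1 x).
case: ex_minnP => j xj jmin; rewrite -[LHS](prepend_ctake_shift j.+1 x); congr prepend.
apply: (@eq_from_nth _ false); rewrite ?size_ctake ?size_rcons ?size_nseq // => i hi.
rewrite nth_ctake // nth_rcons size_nseq.
case: (ltngtP i j) => [hij | hji | ->]; last by rewrite xj.
  by rewrite nth_nseq hij; apply/negbTE/negP => /jmin; rewrite leqNgt hij.
by move: hi; rewrite ltnS leqNgt hji.
Qed.

Definition after_first_one (hp : cantor -> cantor) (x : cantor) : cantor :=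
  match excluded_middle_informative (exists j, x j) with
  | left ex => prepend (first_one_word (ex_minn ex)) (hp (shift (ex_minn ex).+1 x))
  | right _ => x
  end.

Section AfterFirstOne.
Variable hp : cantor -> cantor.

Lemma after_first_one_zeros x : (forall j, x j = false) -> after_first_one hp x = x.
Proof.
move=> hx; rewrite /after_first_one; case: excluded_middle_informative => // ex.
by exfalso; case: ex => j; rewrite hx.
Qed.

Lemma after_first_one_word j y :
  after_first_one hp (prepend (first_one_word j) y) = prepend (first_one_word j) (hp y).
Proof.
rewrite /after_first_one; case: excluded_middle_informative => [ex | []]; last first.
  by exists j; rewrite prepend_first_one_word eqxx.
case: ex_minnP => k; rewrite prepend_first_one_word => /orP [/eqP -> _ | /andP [hjk _]].
  by rewrite -(size_first_one_word j) shift_prepend.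
by move=> /(_ j); rewrite prepend_first_one_word eqxx => /(_ isT); lia.
Qed.

Lemma after_first_one_nseq j y :
  after_first_one hp (prepend (nseq j false) y) = prepend (nseq j false) (after_first_one hp y).
Proof.
case: (cantor_first_one y) => [hy | [k [y' ->]]]; last first.
  have wE : nseq j false ++ first_one_word k = first_one_word (j + k).
    by rewrite /first_one_word nseqD rcons_cat.
  by rewrite prepend_cat wE !after_first_one_word -wE prepend_cat.
rewrite !after_first_one_zeros // => i; case: (ltnP i j) => hi.
  by rewrite prepend_lt ?size_nseq // nth_nseq hi.
by rewrite prepend_ge ?size_nseq.
Qed.
End AfterFirstOne.

Lemma after_first_one_true hp u y :
  after_first_one hp (prepend (true :: u) y) = prepend [:: true] (hp (prepend u y)).
Proof. by rewrite prepend_cons (after_first_one_word hp 0). Qed.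

Lemma after_first_one_false hp u y :
  after_first_one hp (prepend (false :: u) y) =
  prepend [:: false] (after_first_one hp (prepend u y)).
Proof. by rewrite prepend_cons (after_first_one_nseq hp 1). Qed.

Lemma after_first_oneK hp hpi : cancel hp hpi -> cancel (after_first_one hp) (after_first_one hpi).
Proof.
move=> hpK x; case: (cantor_first_one x) => [hx | [j [y ->]]].
  by rewrite !after_first_one_zeros.
by rewrite !after_first_one_word hpK.
Qed.

Lemma continuous_at_cylinder F G u w x :
  (forall y, F (prepend u y) = prepend w (G y)) -> cantor_continuous G -> ctake (size u) x = u ->
  forall n, exists m, forall y, agree m x y -> agree n (F x) (F y).
Proof.
move=> FE G_cont xu n; have [m hm] := G_cont (shift (size u) x) n.
exists (size u + m) => y hxy.
have yu : ctake (size u) y = u.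
  by rewrite -[RHS]xu; apply/esym/agree_ctake/(agree_le (leq_addr _ _) hxy).
rewrite -(prepend_ctake_shift (size u) x) -(prepend_ctake_shift (size u) y) xu yu !FE.
apply: (agree_le (leq_addl (size w) n)); apply/agree_prepend/hm => i hi.
by apply: hxy; rewrite ltn_add2l.
Qed.

Lemma continuous_after_first_one hp :
  cantor_continuous hp -> cantor_continuous (after_first_one hp).
Proof.
move=> hp_cont x n; case: (cantor_first_one x) => [x0 | [j [y ->]]]; last first.
  apply: (continuous_at_cylinder (F := after_first_one hp) _ hp_cont (ctake_prepend _ _)) => y'.
  exact: after_first_one_word.
exists n => y hxy; rewrite after_first_one_zeros //.
case: (cantor_first_one y) => [y0 | [j [y' yE]]]; first by rewrite after_first_one_zeros.
have hjn : n <= j.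
  by rewrite leqNgt; apply/negP => /hxy; rewrite x0 yE prepend_first_one_word eqxx.
rewrite yE after_first_one_word => i hi.
rewrite x0 prepend_first_one_word; case: (ltngtP i j); lia.
Qed.

(* [copies hp] acts as [hp] on each of the cylinders 0, 101, 1001, ... and fixes all other
   points. *)
Definition copies (hp : cantor -> cantor) (x : cantor) : cantor :=
  if x 0 then (if x 1 then x else prepend [:: true; false] (after_first_one hp (shift 2 x)))
  else prepend [:: false] (hp (shift 1 x)).

Section Copies.
Variable hp : cantor -> cantor.

Lemma copies_false u y : copies hp (prepend (false :: u) y) = prepend [:: false] (hp (prepend u y)).
Proof. by rewrite /copies; prepend_simpl. Qed.

Lemma copies_true_true u y :
  copies hp (prepend [:: true, true & u] y) = prepend [:: true, true & u] y.
Proof. by rewrite /copies; prepend_simpl. Qed.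

Lemma copies_true_false u y :
  copies hp (prepend [:: true, false & u] y) =
  prepend [:: true; false] (after_first_one hp (prepend u y)).
Proof. by rewrite /copies; prepend_simpl. Qed.

Lemma continuous_copies : cantor_continuous hp -> cantor_continuous (copies hp).
Proof.
move=> hp_cont x; rewrite (prepend_ctake2 x); case: (x 0) (x 1) => [] [].
- apply: (continuous_at_cylinder (F := copies hp) _ continuous_id (ctake_prepend _ _)) => y.
  exact: (copies_true_true [::]).
- apply: (continuous_at_cylinder (F := copies hp) _ (continuous_after_first_one hp_cont)
           (ctake_prepend _ _)) => y.
  by rewrite (copies_true_false [::]) prepend_nil.
- apply: (continuous_at_cylinder (F := copies hp) (u := [:: false]) _ hp_cont) => //.
  by move=> y; rewrite copies_false prepend_nil.
- apply: (continuous_at_cylinder (F := copies hp) (u := [:: false]) _ hp_cont) => //.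
  by move=> y; rewrite copies_false prepend_nil.
Qed.
End Copies.

Lemma copiesK hp hpi : cancel hp hpi -> cancel (copies hp) (copies hpi).
Proof.
move=> hpK x; rewrite (prepend_ctake2 x); case: (x 0) (x 1) => [] [];
  by rewrite ?copies_true_true ?copies_true_false ?copies_false ?prepend_nil
       ?(after_first_oneK hpK) ?hpK ?prepend_cat.
Qed.

Section ResidualsOfCopies.
Variables hp hpi : cantor -> cantor.
Hypothesis hpK : cancel hp hpi.

Lemma residual_finite_after_first_one :
  residual_finite hp -> residual_finite (after_first_one hp).
Proof.
move=> Fhp; have afo_inj := can_inj (after_first_oneK hpK).
apply: (finitely_many_sub (finitely_manyU (finitely_many1 (strip_lcp (after_first_one hp))) Fhp)).
move=> F [u ->]; case: (word_first_one u) => [uE | [j [u' ->]]].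
  left; apply: (strip_lcp_prepend (w := nseq (size u) false)); last exact: inj_nonconstant afo_inj.
  by move=> x; rewrite {1}uE after_first_one_nseq.
right; exists u'; apply: (strip_lcp_prepend (w := first_one_word j)).
  by move=> x; rewrite -prepend_cat after_first_one_word.
exact: inj_nonconstant_prepend (can_inj hpK).
Qed.

Lemma residual_finite_copies : residual_finite hp -> residual_finite (copies hp).
Proof.
move=> Fhp; have hp_inj := can_inj hpK; have afo_inj := can_inj (after_first_oneK hpK).
apply: (finitely_many_sub (finitely_manyU Fhp (finitely_manyU (finitely_many1 (strip_lcp id))
  (finitely_manyU (residual_finite_after_first_one Fhp)
    (finitely_many_image (residual (copies hp)) (finitely_many_words 1)))))).
move=> F [u ->]; case: u => [|[] u]; first by right; right; right; exists [::].
  case: u => [|[] u]; first by right; right; right; exists [:: true].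
    right; left; apply: (strip_lcp_prepend (w := [:: true, true & u])); last exact: inj_nonconstant.
    by move=> x; rewrite copies_true_true.
  right; right; left; exists u; apply: (strip_lcp_prepend (w := [:: true; false])).
    by move=> x; rewrite copies_true_false.
  exact: inj_nonconstant_prepend afo_inj.
left; exists u; apply: (strip_lcp_prepend (w := [:: false])).
  by move=> x; rewrite copies_false.
exact: inj_nonconstant_prepend hp_inj.
Qed.
End ResidualsOfCopies.

Definition fixes_cylinder (w : seq bool) (h : cantor -> cantor) : Prop :=
  forall y, h (prepend w y) = prepend w y.

Lemma fixes_cylinder_can w h hi : cancel h hi -> fixes_cylinder w h -> fixes_cylinder w hi.
Proof. by move=> hK h_fix y; rewrite -{1}h_fix hK. Qed.

(* The action of [h] inside the cylinder 0, when [h] fixes the cylinder 1 pointwise. *)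
Definition tail0 (h : cantor -> cantor) (y : cantor) : cantor := shift 1 (h (prepend [:: false] y)).

Lemma continuous_tail0 h : cantor_continuous h -> cantor_continuous (tail0 h).
Proof.
move=> h_cont; apply: (@continuous_shift 1 (h \o prepend [:: false])).
exact: continuous_comp h_cont (continuous_prepend _).
Qed.

Section FixingOne.
Variable h : cantor -> cantor.
Hypotheses (h_inj : injective h) (h_fix : fixes_cylinder [:: true] h).

Lemma fixes_cylinder_cons u : fixes_cylinder (true :: u) h.
Proof. by move=> y; rewrite prepend_cons h_fix. Qed.

Lemma tail0E y : h (prepend [:: false] y) = prepend [:: false] (tail0 h y).
Proof.
rewrite -[LHS](prepend_ctake_shift 1); congr prepend; rewrite /ctake /mkseq /=.
case e : (h (prepend [:: false] y) 0) => //.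
have : h (prepend [:: false] y) = h (prepend [:: true] (tail0 h y)).
  by rewrite h_fix -[LHS](prepend_ctake_shift 1) /ctake /mkseq /= e.
by move=> /h_inj /(congr1 (fun z => z 0)).
Qed.

Lemma tail0_cons u y : h (prepend (false :: u) y) = prepend [:: false] (tail0 h (prepend u y)).
Proof. by rewrite prepend_cons tail0E. Qed.

Lemma tail0K hi : cancel h hi -> cancel (tail0 h) (tail0 hi).
Proof. by move=> hK y; rewrite {1}/tail0 -tail0E hK shift1_cons prepend_nil. Qed.

Lemma tail0_inj : injective (tail0 h).
Proof.
by move=> y1 y2 e; apply: (@prepend_inj [:: false]); apply: h_inj; rewrite !tail0E e.
Qed.

Lemma residual_finite_tail0 : residual_finite h -> residual_finite (tail0 h).
Proof.
move=> Fh; apply: (finitely_many_sub Fh) => F [u ->]; exists (false :: u); symmetry.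
apply: (strip_lcp_prepend (w := [:: false])); first by move=> x; rewrite tail0_cons.
exact: inj_nonconstant_prepend tail0_inj.
Qed.

Lemma copies_commute x : h (copy_shift (copies (tail0 h) x)) = copies (tail0 h) (copy_shift x).
Proof.
rewrite (prepend_ctake3 x); move: (x 0) (x 1) (x 2) (shift 3 x) => a b c y.
by case: a; case: b; case: c;
  do 3 rewrite ?copies_false ?copies_true_true ?copies_true_false ?copy_shift_false
    ?copy_shift_true_false ?copy_shift_true_true_false ?copy_shift_true_true_true
    ?fixes_cylinder_cons ?tail0_cons ?after_first_one_true
    ?after_first_one_false ?prepend_cat /=;
  prepend_simpl.
Qed.
End FixingOne.

Lemma RH_copies h : RH h -> fixes_cylinder [:: true] h -> RH (copies (tail0 h)).
Proof.
move=> /RHE [[hi [hK [hiK [h_cont hi_cont]]]] Fh] h_fix.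
have hi_fix := fixes_cylinder_can hK h_fix.
have h_inj := can_inj hK; have hi_inj := can_inj hiK.
apply/RHE; split.
  exists (copies (tail0 hi)); split; first exact/copiesK/tail0K.
  split; first exact/copiesK/tail0K.
  by split; apply/continuous_copies/continuous_tail0.
by apply: residual_finite_copies (tail0K h_inj h_fix hK) _; exact: residual_finite_tail0.
Qed.

Lemma commutator_of_fixes_one h : RH h -> fixes_cylinder [:: true] h -> commutator_RH h.
Proof.
move=> Rh h_fix; have [[hi [hK [hiK _]]] _] := proj1 (RHE h) Rh.
have hi_fix := fixes_cylinder_can hK h_fix.
have h_inj := can_inj hK; have hi_inj := can_inj hiK.
have tK := copiesK (tail0K h_inj h_fix hK); have tiK := copiesK (tail0K hi_inj hi_fix hiK).
exists (copies (tail0 hi)), (copies (tail0 h)), copy_shift_inv, copy_shift.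
split; first exact: RH_copies (RH_inv Rh hiK hK) hi_fix.
split; first exact: RH_copy_shift_inv.
do 4 (split; first by [] || exact: copy_shift_invK || exact: copy_shiftK).
apply: functional_extensionality => x /=.
by rewrite -(copies_commute h_inj h_fix) tiK copy_shift_invK.
Qed.

Lemma commutator_RH_conj g p p' : commutator_RH g -> RH p -> cancel p' p -> cancel p p' ->
  commutator_RH (p' \o g \o p).
Proof.
move=> [a [a' [b [b' [Ra [Rb [aK [a'K [bK [b'K ->]]]]]]]]]] Rp p'K pK.
have Rp' := RH_inv Rp p'K pK.
exists (p' \o a \o p), (p' \o a' \o p), (p' \o b \o p), (p' \o b' \o p).
do 2 (split; first by apply: RH_comp => //; apply: RH_comp).
do 4 (split; first by move=> x /=; rewrite p'K ?aK ?a'K ?bK ?b'K pK).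
by apply: functional_extensionality => x /=; rewrite !p'K.
Qed.

Lemma commutator_of_fixes_ones k h : RH h -> fixes_cylinder (nseq k.+1 true) h -> commutator_RH h.
Proof.
elim: k h => [|k IH] h Rh h_fix; first exact: commutator_of_fixes_one.
have Rpi : RH push_one_inv := RH_inv RH_push_one push_one_invK push_oneK.
have -> : h = push_one \o (push_one_inv \o h \o push_one) \o push_one_inv.
  by apply: functional_extensionality => x /=; rewrite !push_one_invK.
have Rh' : RH (push_one_inv \o h \o push_one) := RH_comp (RH_comp Rpi Rh) RH_push_one.
apply: commutator_RH_conj Rpi push_oneK push_one_invK; apply: IH Rh' _ => y /=.
by rewrite push_one_cons h_fix -push_one_cons push_oneK.
Qed.

Lemma commutator_of_fixes_cylinder w h : RH h -> fixes_cylinder w h -> commutator_RH h.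
Proof.
move=> Rh h_fix; set m := map negb (rcons w true).
have -> : h = flip m \o (flip m \o h \o flip m) \o flip m.
  by apply: functional_extensionality => x /=; rewrite !flipK.
apply: commutator_RH_conj (RH_flip m) (flipK m) (flipK m).
apply: (@commutator_of_fixes_ones (size w)).
  exact: RH_comp (RH_comp (RH_flip m) Rh) (RH_flip m).
move=> y; rewrite -(size_rcons w true) /= flip_ones -cats1 -prepend_cat h_fix.
by rewrite prepend_cat cats1 -(flip_ones (rcons w true) y) flipK.
Qed.

(** * Splitting a rational homeomorphism into two elements fixing a cylinder *)

Definition in_cylinder (w : seq bool) (y : cantor) : bool := ctake (size w) y == w.

Lemma in_cylinder_agree w y z : agree (size w) y z -> in_cylinder w y = in_cylinder w z.
Proof. by move=> /agree_ctake e; rewrite /in_cylinder e. Qed.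

Lemma in_cylinder_prepend w y : in_cylinder w (prepend w y).
Proof. by rewrite /in_cylinder ctake_prepend. Qed.

Lemma in_cylinder_head b w y : in_cylinder (b :: w) y -> y 0 = b.
Proof. by move=> /eqP; rewrite /ctake /mkseq /= => -[]. Qed.

Lemma in_cylinder_ctake n x y : in_cylinder (ctake n x) y -> agree n x y.
Proof. by move=> /eqP; rewrite size_ctake => e; apply/agree_ctake. Qed.

Lemma displaced_cylinder f fi : cancel f fi -> cancel fi f -> cantor_continuous f ->
  (exists x, f x <> x) ->
  exists w z, [/\ w != [::], forall y, in_cylinder w y -> ~~ in_cylinder w (f y),
                  ~~ in_cylinder w z & ~~ in_cylinder w (fi z)].
Proof.
move=> fK fiK f_cont [x fx].
have [j hj] : exists j, f x j <> x j.
  apply: NNPP => hn; apply/fx/functional_extensionality => i.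
  by apply: NNPP => h; apply: hn; exists i.
have [m0 hm0] := f_cont x j.+1; set m := maxn m0 j.+2.
have near_x y : in_cylinder (ctake m x) y -> f x j = f y j.
  by move=> /in_cylinder_ctake /(agree_le (leq_maxl _ _)) /hm0; apply.
pose z := prepend (rcons (ctake j.+1 x) (~~ x j.+1)) zeros.
have zj : z j = x j.
  by rewrite /z prepend_lt ?size_rcons ?size_ctake // nth_rcons size_ctake ltnSn nth_ctake.
have jm : j.+1 < m by rewrite /m; lia.
exists (ctake m x), z; split.
- by rewrite -size_eq0 size_ctake -lt0n; lia.
- move=> y yC; apply/negP => /in_cylinder_ctake /(_ j (ltnW jm)).
  by rewrite -(near_x _ yC) => e; apply: hj.
- apply/negP => /in_cylinder_ctake /(_ j.+1 jm); rewrite /z prepend_lt ?size_rcons ?size_ctake //.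
  by rewrite nth_rcons size_ctake ltnn eqxx; case: (x j.+1).
- by apply/negP => /near_x; rewrite fiK zj.
Qed.

Lemma continuous_of_local F :
  (forall x, exists m G, cantor_continuous G /\ forall y, agree m x y -> F y = G y) ->
  cantor_continuous F.
Proof.
move=> hloc x n; have [m [G [G_cont FG]]] := hloc x; have [k hk] := G_cont x n.
exists (maxn m k) => y hxy.
rewrite !FG //; last exact: agree_le (leq_maxl m k) hxy.
exact/hk/(agree_le (leq_maxr m k) hxy).
Qed.

Section Swap.
Variables (f fi : cantor -> cantor) (w : seq bool).
Hypotheses (fK : cancel f fi) (fiK : cancel fi f) (fi_cont : cantor_continuous fi).
Hypothesis f_displaces : forall y, in_cylinder w y -> ~~ in_cylinder w (f y).

Definition swap (y : cantor) : cantor :=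
  if in_cylinder w y then f y else if in_cylinder w (fi y) then fi y else y.

Lemma swapK : involutive swap.
Proof.
move=> y; rewrite {2}/swap; case yC: (in_cylinder w y).
  by rewrite /swap (negbTE (f_displaces yC)) fK yC.
by case fiyC: (in_cylinder w (fi y)); rewrite /swap ?fiK ?yC ?fiyC.
Qed.

Lemma swap_f y : in_cylinder w y -> swap (f y) = y.
Proof. by move=> yC; rewrite /swap (negbTE (f_displaces yC)) fK yC. Qed.

Lemma swap_locally_constant y : exists n, forall y', agree n y y' ->
  in_cylinder w y' = in_cylinder w y /\ in_cylinder w (fi y') = in_cylinder w (fi y).
Proof.
have [k hk] := fi_cont y (size w); exists (maxn (size w) k) => y' hy'; split.
  by apply/esym/in_cylinder_agree/(agree_le (leq_maxl _ _) hy').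
by apply/esym/in_cylinder_agree/hk/(agree_le (leq_maxr _ _) hy').
Qed.

Lemma continuous_swap : cantor_continuous f -> cantor_continuous swap.
Proof.
move=> f_cont; apply: continuous_of_local => y; have [n hn] := swap_locally_constant y; exists n.
case yC: (in_cylinder w y); first by exists f; split=> // y' /hn [e _]; rewrite /swap e yC.
case fyC: (in_cylinder w (fi y)).
  by exists fi; split=> // y' /hn [e1 e2]; rewrite /swap e1 e2 yC fyC.
by exists id; split=> [|y' /hn [e1 e2]]; [exact: continuous_id | rewrite /swap e1 e2 yC fyC].
Qed.

Lemma residual_finite_swap : residual_finite f -> residual_finite fi -> residual_finite swap.
Proof.
move=> Ff Ffi.
have [d hd] : exists d, forall y y', agree d y y' -> in_cylinder w (fi y) = in_cylinder w (fi y').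
  apply: uniformly_locally_constant => y; have [n hn] := swap_locally_constant y.
  by exists n => y' /hn [].
set D := maxn d (size w).
apply: (finitely_many_sub (finitely_manyU (finitely_manyU Ff Ffi) (finitely_manyU
  (finitely_many1 (strip_lcp id)) (finitely_many_image (residual swap) (finitely_many_words D))))).
move=> F [u ->]; case: (ltnP (size u) D) => hu.
  by right; right; exists u; split=> //; exact: ltnW.
have const (P : cantor -> bool) k : k <= D -> (forall y y', agree k y y' -> P y = P y') ->
    forall y, P (prepend u y) = P (prepend u zeros).
  move=> hk hP y; apply: hP; apply: (agree_le (leq_trans hk hu)).
  by apply: (agree_le (leq_addr 0 _)); apply/agree_prepend.
have uC := const _ _ (leq_maxr d (size w)) (@in_cylinder_agree w).
have fuC := const _ _ (leq_maxl d (size w)) hd.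
case e1: (in_cylinder w (prepend u zeros)).
  left; left; exists u; congr strip_lcp; apply: functional_extensionality => y.
  by rewrite /swap uC e1.
case e2: (in_cylinder w (fi (prepend u zeros))).
  left; right; exists u; congr strip_lcp; apply: functional_extensionality => y.
  by rewrite /swap uC e1 fuC e2.
right; left; apply: (strip_lcp_prepend (w := u)); last exact: inj_nonconstant.
by move=> y; rewrite /swap uC e1 fuC e2.
Qed.
End Swap.

Definition fixes_some_cylinder (h : cantor -> cantor) : Prop :=
  exists2 v, v != [::] & fixes_cylinder v h.

Lemma fixes_some_cylinder_swap f fi w z : cantor_continuous fi ->
  ~~ in_cylinder w z -> ~~ in_cylinder w (fi z) -> fixes_some_cylinder (swap f fi w).
Proof.
move=> fi_cont zC fzC; have [n hn] := swap_locally_constant w fi_cont z.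
exists (ctake n.+1 z); first by rewrite -size_eq0 size_ctake.
move=> y; have [e1 e2] := hn _ (agree_le (leqnSn n) (@agree_ctake_prepend n.+1 z y)).
by rewrite /swap e1 e2 (negbTE zC) (negbTE fzC).
Qed.

Lemma RH_swap_decomposition f : RH f -> (exists x, f x <> x) ->
  exists g, [/\ RH g, involutive g, fixes_some_cylinder g & fixes_some_cylinder (g \o f)].
Proof.
move=> Rf moved; have [[fi [fK [fiK [f_cont fi_cont]]]] Ff] := proj1 (RHE f) Rf.
have [w [z [w0 f_displaces zC fzC]]] := displaced_cylinder fK fiK f_cont moved.
have Ffi := proj2 (proj1 (RHE fi) (RH_inv Rf fiK fK)).
have gK := swapK fK fiK f_displaces.
exists (swap f fi w); split => //.
- apply/RHE; split; last exact: residual_finite_swap.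
  by exists (swap f fi w); do 2 split => //; split; exact: continuous_swap.
- exact: fixes_some_cylinder_swap fi_cont zC fzC.
- exists w => // y; exact/swap_f/in_cylinder_prepend.
Qed.

Lemma small_support_of_fixes_cylinder h : fixes_some_cylinder h -> small_support h.
Proof.
move=> [[//|b w] _ hw]; exists (fun y => ~~ in_cylinder (b :: w) y); split.
  by split=> y hy; exists (size (b :: w)) => y' /in_cylinder_agree e; rewrite -e.
split; first by exists (prepend [:: ~~ b] zeros); apply/negP => /in_cylinder_head; case: (b).
split; first by exists (prepend (b :: w) zeros); rewrite in_cylinder_prepend.
move=> y /negP /negPn /eqP yw; rewrite -(prepend_ctake_shift (size (b :: w)) y) yw; exact: hw.
Qed.

Lemma RH_gen_by A f : (forall g, A g -> RH g) -> gen_by A f -> RH f.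
Proof.
move=> AR; elim=> [|g h /AR Rg _ Rh|g g' h /AR Rg gK g'K _ Rh]; first exact: RH_id.
  exact: RH_comp.
exact: RH_comp (RH_inv Rg gK g'K) Rh.
Qed.

Lemma RH_gen_byE A : (forall h, RH h -> fixes_some_cylinder h -> A h) -> (forall h, A h -> RH h) ->
  forall f, RH f <-> gen_by A f.
Proof.
move=> cylA AR f; split; last exact: RH_gen_by.
move=> Rf; case: (classic (exists x, f x <> x)) => [moved | fixed].
  have [g [Rg gK gfix gffix]] := RH_swap_decomposition Rf moved.
  have -> : f = g \o ((g \o f) \o id) by apply: functional_extensionality => x /=; rewrite gK.
  by apply: gen_mul (cylA _ Rg gfix) (gen_mul (cylA _ (RH_comp Rg Rf) gffix) (gen_id A)).
have -> : f = id.
  by apply: functional_extensionality => x; apply: NNPP => fx; apply: fixed; exists x.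
exact: gen_id.
Qed.

Lemma RH_of_commutator c : commutator_RH c -> RH c.
Proof.
move=> [a [a' [b [b' [Ra [Rb [aK [a'K [bK [b'K ->]]]]]]]]]].
exact: RH_comp (RH_comp (RH_comp (RH_inv Ra aK a'K) (RH_inv Rb bK b'K)) Ra) Rb.
Qed.

Theorem proposition2p8 :
  (forall f : cantor -> cantor,
     RH f <-> gen_by (fun g => RH g /\ small_support g) f) /\
  (forall f : cantor -> cantor,
     RH f <-> gen_by commutator_RH f).
Proof.
split; apply: RH_gen_byE.
- by move=> h Rh /small_support_of_fixes_cylinder.
- by move=> h [].
- by move=> h Rh [w _]; exact: commutator_of_fixes_cylinder.
- exact: RH_of_commutator.
Qed.
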